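(* For any integer $d\ge1$, the number of partial orders on $\{1,\dots,n\}$ of dimension at most $d$ equals $n^{(d+o(1))n}$.
   Context: The dimension of a partial order $\prec$ on $\{1,\dots,n\}$ is the minimum integer $d$ such that there are points $a_1,\dots,a_n\in\mathbb{R}^d$, $a_i=(a_i^{(1)},\dots,a_i^{(d)})$, with $a_i^{(\ell)}\neq a_j^{(\ell)}$ for all distinct $i,j$ and all $\ell$, and such that for distinct $i,j$ we have $i\prec j$ iff $a_i^{(\ell)}\le a_j^{(\ell)}$ for all $\ell=1,\dots,d$. ''Equals $n^{(c+o(1))n}$'' means equals $n^{(c+\varepsilon(n))n}$ for some function $\varepsilon(n)\to0$ as $n\to\infty$ (for fixed $d$). *)

From mathcomp Require Import all_boot.
From Stdlib Require Import Reals ClassicalEpsilon.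
Set Implicit Arguments. Unset Strict Implicit. Unset Printing Implicit Defensive.

Definition pbool (P : Prop) : bool :=
  if excluded_middle_informative P then true else false.

(* A (non-strict) partial order on {1..n} (encoded as 'I_n), given as a set of pairs
   (i, j) meaning i ≼ j. *)
Definition is_partial_order (n : nat) (P : {set 'I_n * 'I_n}) : Prop :=
  (forall i, (i, i) \in P) /\
  (forall i j, (i, j) \in P -> (j, i) \in P -> i = j) /\
  (forall i j k, (i, j) \in P -> (j, k) \in P -> (i, k) \in P).

Definition realizes (n d : nat) (P : {set 'I_n * 'I_n}) (a : 'I_n -> 'I_d -> R) : Prop :=
  (forall (l : 'I_d) (i j : 'I_n), i <> j -> a i l <> a j l) /\
  (forall i j : 'I_n, i <> j ->
     ((i, j) \in P <-> forall l : 'I_d, Rle (a i l) (a j l))).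

Definition dim_le (n d : nat) (P : {set 'I_n * 'I_n}) : Prop :=
  exists d' : nat, (d' <= d)%N /\ exists a : 'I_n -> 'I_d' -> R, realizes P a.

Definition num_po_dim_le (n d : nat) : nat :=
  #|[set P : {set 'I_n * 'I_n} | pbool (is_partial_order P /\ dim_le d P)]|.

From mathcomp Require Import all_boot zify.
From Stdlib Require Import Reals ClassicalEpsilon Lra.
Set Implicit Arguments. Unset Strict Implicit. Unset Printing Implicit Defensive.

(* Every order considered is the dominance order [order_of c] of n points with
   natural coordinates c, injective in each coordinate (any such c gives an order of
   dimension at most d).
   - Upper bound [N(n) <= n^(nd)]: replacing each real coordinate of a realizer by its
     rank among the n values gives the same order, so every counted order is the
     dominance order of some map [{0..n-1} x {0..d-1} -> {0..n-1}].
   - Lower bound [k^(md) <= N(m + dk)]: d chains of k points form a skeleton, and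
     each of m further points chooses independently, in every chain, how many chain
     points lie below it; coordinates [key * n + index] realize all these choices.
   - With [k = n / (dq)] for a large constant q, taking logarithms squeezes
     [ln N(n) / (n ln n)] to d, which defines the exponent [d + eps n] explicitly. *)

Lemma pboolP (P : Prop) : reflect P (pbool P).
Proof. by rewrite /pbool; case: excluded_middle_informative => h; constructor. Qed.

Definition po_dim_le_set (n d : nat) : {set {set 'I_n * 'I_n}} :=
  [set P | pbool (is_partial_order P /\ dim_le d P)].

Lemma num_po_dim_leE (n d : nat) : num_po_dim_le n d = #|po_dim_le_set n d|.
Proof. by []. Qed.

Definition order_of (n d : nat) (c : 'I_n -> 'I_d -> nat) : {set 'I_n * 'I_n} :=
  [set ij | (ij.1 == ij.2) || [forall l, c ij.1 l <= c ij.2 l]].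

Definition coord_injective (n d : nat) (c : 'I_n -> 'I_d -> nat) : Prop :=
  forall l i j, i <> j -> c i l <> c j l.

Section DominanceOrder.
Variables (n d : nat) (c : 'I_n -> 'I_d -> nat).
Hypothesis c_inj : coord_injective c.

Lemma order_of_partial_order : 0 < d -> is_partial_order (order_of c).
Proof.
move=> d_gt0; split; first by move=> i; rewrite inE eqxx.
split=> [i j|i j k]; rewrite !inE /=.
  move=> /orP [/eqP //|/forallP le_ij] /orP [/eqP //|/forallP le_ji].
  apply/eqP; apply: contraT => /eqP neq_ij.
  by case: (c_inj (l := Ordinal d_gt0) neq_ij); apply/eqP; rewrite eqn_leq le_ij le_ji.
move=> /orP [/eqP -> jk|/forallP le_ij]; first exact: jk.
move=> /orP [/eqP <-|/forallP le_jk]; first by apply/orP; right; apply/forallP.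
by apply/orP; right; apply/forallP => l; exact: leq_trans (le_ij l) (le_jk l).
Qed.

Lemma order_of_dim_le : dim_le d (order_of c).
Proof.
exists d; split=> //; exists (fun i l => INR (c i l)); split.
  by move=> l i j neq_ij /INR_eq; exact: c_inj.
move=> i j /eqP neq_ij; rewrite inE /= (negbTE neq_ij) /=; split.
  by move/forallP => le_ij l; apply/le_INR/leP.
by move=> le_ij; apply/forallP => l; apply/leP/INR_le.
Qed.

Lemma order_of_counted : 0 < d -> order_of c \in po_dim_le_set n d.
Proof.
move=> d_gt0; rewrite inE; apply/pboolP.
by split; [exact: order_of_partial_order | exact: order_of_dim_le].
Qed.

End DominanceOrder.

Lemma order_of_reindex (n d d' : nat) (f : 'I_d -> 'I_d') (c : 'I_n -> 'I_d' -> nat) :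
  (forall l', exists l, f l = l') -> order_of (fun i l => c i (f l)) = order_of c.
Proof.
move=> f_onto; apply/setP => -[i j]; rewrite !inE /=; congr (_ || _).
apply/forallP/forallP => [le_ij l'|le_ij l]; last exact: le_ij.
by have [l <-] := f_onto l'; exact: le_ij.
Qed.

(* Tagging a key by the index of the point: coordinate [key i l * n + i].
   Ties between keys are broken by the index, so the result is coordinate-injective. *)
Definition tagged (n d : nat) (key : 'I_n -> 'I_d -> nat) (i : 'I_n) (l : 'I_d) : nat :=
  key i l * n + i.

Lemma tagged_injective (n d : nat) (key : 'I_n -> 'I_d -> nat) :
  coord_injective (tagged key).
Proof.
move=> l i j neq_ij eq_ij; apply: neq_ij; apply: val_inj => /=.
have := congr1 (modn^~ n) eq_ij; rewrite /= !modnMDl !modn_small //; exact: ltn_ord.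
Qed.

Lemma leq_tagged (n a b i j : nat) : i < n -> j < n ->
  (a * n + i <= b * n + j) = (a < b) || (a == b) && (i <= j).
Proof.
move=> lt_in lt_jn; case: (ltngtP a b) => [lt_ab|lt_ba|->] /=; last exact: leq_add2l.
- have : a.+1 * n <= b * n by rewrite leq_mul2r lt_ab orbT.
  by rewrite mulSn; lia.
- have : b.+1 * n <= a * n by rewrite leq_mul2r lt_ba orbT.
  by rewrite mulSn; lia.
Qed.

Definition below (n : nat) (v : 'I_n -> R) (i : 'I_n) : {set 'I_n} :=
  [set x | pbool (v x < v i)%R].

Lemma card_below_lt (n : nat) (v : 'I_n -> R) (i : 'I_n) : #|below v i| < n.
Proof.
rewrite -[n in _ < n]card_ord -cardsT; apply: proper_card; apply/properP.
split; first exact: subsetT.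
by exists i; rewrite ?inE //; apply/negP => /pboolP; lra.
Qed.

Definition rank (n : nat) (v : 'I_n -> R) (i : 'I_n) : 'I_n := Ordinal (card_below_lt v i).

Lemma rank_leq (n : nat) (v : 'I_n -> R) (i j : 'I_n) :
  (v i <= v j)%R <-> rank v i <= rank v j.
Proof.
rewrite /=; split=> [le_ij|].
  apply: subset_leq_card; apply/subsetP => x; rewrite !inE => /pboolP lt_xi.
  by apply/pboolP; lra.
case: (Rle_lt_dec (v i) (v j)) => // lt_ji; rewrite leqNgt => /negP; case.
apply: proper_card; apply/properP; split.
  by apply/subsetP => x; rewrite !inE => /pboolP lt_xj; apply/pboolP; lra.
by exists j; rewrite inE; [apply/pboolP | apply/negP => /pboolP; lra].
Qed.

Lemma realized_order_of_ranks (n d : nat) (P : {set 'I_n * 'I_n}) (a : 'I_n -> 'I_d -> R) :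
  (forall i, (i, i) \in P) -> realizes P a ->
  P = order_of (fun i l => rank (a^~ l) i).
Proof.
move=> refl [_ real]; apply/setP => -[i j]; rewrite inE -[(i, j).1]/i -[(i, j).2]/j.
case: (eqVneq i j) => [<-|/eqP neq_ij]; first by rewrite refl.
apply/idP/forallP => [/(real _ _ neq_ij) le_ij l|le_ij]; first exact: (rank_leq _ _ _).1 (le_ij l).
by apply/(real _ _ neq_ij) => l; apply: (rank_leq _ _ _).2 (le_ij l).
Qed.

(* On at least two points, every order of dimension at most [d] is the dominance
   order of points in [{0..n-1}^d]: a realizer needs at least one coordinate, and
   may be padded to exactly [d] coordinates by repeating its first one. *)
Lemma po_dim_le_grid (n d : nat) (P : {set 'I_n * 'I_n}) : 1 < n ->
  P \in po_dim_le_set n d -> exists c : 'I_n -> 'I_d -> 'I_n, P = order_of c.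
Proof.
move=> n_gt1; rewrite inE => /pboolP [[refl [antisym _]] [[|d'] [le_d'd [a real]]]].
  suff : Ordinal (ltnW n_gt1) = Ordinal n_gt1 :> 'I_n by move/(congr1 val).
  by apply: antisym; apply/(real.2) => // -[].
pose pad (l : 'I_d) : 'I_d'.+1 := insubd ord0 (val l).
exists (fun i l => rank (a^~ (pad l)) i).
rewrite (@order_of_reindex _ _ _ pad (fun i l => rank (a^~ l) i)).
  exact: realized_order_of_ranks.
move=> l'; have lt_l'd : val l' < d by apply: leq_trans (ltn_ord l') le_d'd.
by exists (Ordinal lt_l'd); apply: val_inj; rewrite /= val_insubd /= ltn_ord.
Qed.

Lemma num_po_dim_le_upper (n d : nat) : 1 < n -> num_po_dim_le n d <= expn n (n * d).
Proof.
move=> n_gt1.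
pose F (f : {ffun 'I_n * 'I_d -> 'I_n}) := order_of (fun i l => f (i, l)).
have -> : expn n (n * d) = #|{ffun 'I_n * 'I_d -> 'I_n}| by rewrite card_ffun card_prod !card_ord.
rewrite num_po_dim_leE.
apply: leq_trans (leq_imset_card F predT); apply: subset_leq_card.
apply/subsetP => P /(po_dim_le_grid n_gt1) [c ->].
apply/imsetP; exists [ffun il => c il.1 il.2] => //.
apply/setP => -[i j]; rewrite !inE /=; congr (_ || _).
by apply: eq_forallb => l; rewrite !ffunE.
Qed.

(* On the ground set [{0..m-1} + {0..dk-1}] we fix a "skeleton" of
   [d] chains of [k] points (skeleton point [j] lies on chain [j %/ k] at height
   [j %% k]) and attach each of the [m] free points [x], independently in every
   chain [l], above the first [g (x, l) + 1] points of that chain. *)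
Section SkeletonEncoding.
Variables m d k : nat.

Definition skeleton_key (g : {ffun 'I_m * 'I_d -> 'I_k}) (i : 'I_(m + d * k)) (l : 'I_d) : nat :=
  match fintype.split i with
  | inl x => (g (x, l)).+1
  | inr j => if j %/ k == l then j %% k else 0
  end.

Definition encode (g : {ffun 'I_m * 'I_d -> 'I_k}) : {set 'I_(m + d * k) * 'I_(m + d * k)} :=
  order_of (tagged (skeleton_key g)).

Lemma encode_skeleton_below g (x : 'I_m) (j : 'I_(d * k)) (l : 'I_d) :
  j %/ k = l -> ((rshift m j, lshift (d * k) x) \in encode g) = (j %% k <= g (x, l)).
Proof.
move=> chain_j; rewrite inE /=.
have -> : (rshift m j == lshift (d * k) x) = false.
  by apply/negbTE; rewrite -val_eqE /=; have := ltn_ord x; lia.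
have lt_j : m + j < m + d * k := ltn_ord (rshift m j).
have lt_x : x < m + d * k := ltn_ord (lshift (d * k) x).
rewrite /tagged /skeleton_key /= (unsplitK (inr j)) (unsplitK (inl x)).
apply/forallP/idP => [/(_ l)|le_jg l'].
  rewrite chain_j eqxx (leq_tagged _ _ lt_j lt_x) ltnS => /orP [//|/andP [_]].
  by have := ltn_ord x; lia.
rewrite (leq_tagged _ _ lt_j lt_x); apply/orP; left.
case: eqP => [chain_l'|_] //.
by have -> : l' = l by apply: val_inj; rewrite /= -chain_l' chain_j.
Qed.

Lemma chain_point_subproof (l : 'I_d) (t : 'I_k) : l * k + t < d * k.
Proof.
have : l.+1 * k <= d * k by rewrite leq_mul2r ltn_ord orbT.
by rewrite mulSn; have := ltn_ord t; lia.
Qed.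

Definition chain_point (l : 'I_d) (t : 'I_k) : 'I_(d * k) := Ordinal (chain_point_subproof l t).

Lemma chain_pointE (l : 'I_d) (t : 'I_k) : chain_point l t %/ k = l /\ chain_point l t %% k = t.
Proof.
have k_gt0 : 0 < k by case: k t => [[]|].
by rewrite /= divnMDl // modnMDl divn_small ?modn_small ?addn0.
Qed.

Lemma encode_inj : injective encode.
Proof.
move=> g h eq_gh; apply/ffunP => -[x l]; apply: val_inj.
have same_cut (t : 'I_k) : (t <= g (x, l)) = (t <= h (x, l)).
  have [chain_t height_t] := chain_pointE l t.
  rewrite -{1}height_t -(@encode_skeleton_below g x _ l chain_t) eq_gh.
  by rewrite (@encode_skeleton_below h x _ l chain_t) height_t.
by apply/eqP; rewrite eqn_leq -same_cut leqnn same_cut leqnn.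
Qed.

Lemma num_po_dim_le_lower : 0 < d -> expn k (m * d) <= num_po_dim_le (m + d * k) d.
Proof.
move=> d_gt0.
have -> : expn k (m * d) = #|{ffun 'I_m * 'I_d -> 'I_k}| by rewrite card_ffun card_prod !card_ord.
rewrite num_po_dim_leE -(card_imset predT encode_inj); apply: subset_leq_card.
by apply/subsetP => _ /imsetP [g _ ->]; apply: order_of_counted => //; exact: tagged_injective.
Qed.

End SkeletonEncoding.

Lemma num_po_dim_le_gt0 (n d : nat) : 0 < d -> 0 < num_po_dim_le n d.
Proof.
move=> d_gt0; apply/card_gt0P; exists (order_of (tagged (fun (_ : 'I_n) (_ : 'I_d) => 0))).
apply: order_of_counted => //; exact: tagged_injective.
Qed.

Lemma num_po_dim_le1 (d : nat) : 0 < d -> num_po_dim_le 1 d = 1.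
Proof.
move=> d_gt0; apply/eqP; rewrite eqn_leq num_po_dim_le_gt0 // andbT num_po_dim_leE.
apply: (@leq_trans #|[set [set: 'I_1 * 'I_1]]|); last by rewrite cards1.
apply: subset_leq_card.
apply/subsetP => P; rewrite !inE => /pboolP [[refl _] _].
by apply/eqP/setP => -[i j]; rewrite inE (ord1 i) (ord1 j) refl.
Qed.

(* Asymptotics.  Taking logarithms, the two bounds give
   [d n (1 - 1/q) (ln n - ln (2dq)) <= ln N(n) <= d n ln n] for every [q >= 1],
   so [ln N(n) / (n ln n) - d] tends to [0]. *)
Section Asymptotics.
Local Open Scope R_scope.

Lemma INR_muln (a b : nat) : INR (a * b)%nat = INR a * INR b.
Proof. by rewrite -multE mult_INR. Qed.

Lemma INR_addn (a b : nat) : INR (a + b)%nat = INR a + INR b.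
Proof. by rewrite -plusE plus_INR. Qed.

Lemma INR_expn (a b : nat) : INR (expn a b) = INR a ^ b.
Proof. by elim: b => [|b IHb]; rewrite ?expn0 // expnS INR_muln IHb. Qed.

Lemma INR_pos (a : nat) : (0 < a)%nat -> 0 < INR a.
Proof. by move=> a_gt0; apply/lt_0_INR/ltP. Qed.

Lemma INR_leq (a b : nat) : (a <= b)%nat -> INR a <= INR b.
Proof. by move=> le_ab; apply/le_INR/leP. Qed.

Lemma ln_le (x y : R) : 0 < x -> x <= y -> ln x <= ln y.
Proof.
move=> x_gt0 [lt_xy|<-]; last exact: Rle_refl.
exact/Rlt_le/ln_increasing.
Qed.

Lemma ln_INR_ge0 (a : nat) : (0 < a)%nat -> 0 <= ln (INR a).
Proof. by move=> a_gt0; rewrite -ln_1; apply: ln_le; [lra | exact: (INR_leq a_gt0)]. Qed.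

Lemma ln_INR_gt0 (a : nat) : (1 < a)%nat -> 0 < ln (INR a).
Proof. by move=> a_gt1; rewrite -ln_1; apply: ln_increasing; [lra | apply/lt_1_INR/ltP]. Qed.

Lemma ln_INR_unbounded (C : R) : exists n0 : nat, forall n : nat, (n0 <= n)%nat -> C < ln (INR n).
Proof.
have [n0 lt_n0] := INR_unbounded (exp C); exists n0 => n le_n0n.
rewrite -[C]ln_exp; apply: ln_increasing; first exact: exp_pos.
by apply: Rlt_le_trans (INR_leq le_n0n).
Qed.

Lemma lt_half_of_large_div (a b eps : R) :
  0 <= a -> 0 < eps -> 2 * a / eps < b -> a / b < eps / 2.
Proof.
move=> a_ge0 eps_pos lt_b.
have lt_2a : 2 * a < b * eps.
  have := Rmult_lt_compat_r eps _ _ eps_pos lt_b.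
  by rewrite (_ : 2 * a / eps * eps = 2 * a) //; field; lra.
have b_pos : 0 < b by nra.
apply: (Rmult_lt_reg_r b) => //.
rewrite (_ : a / b * b = a); [lra | field; lra].
Qed.

Variable d : nat.
Hypothesis d_gt0 : (0 < d)%nat.

Lemma ln_num_po_upper (n : nat) : (1 < n)%nat ->
  ln (INR (num_po_dim_le n d)) <= INR d * INR n * ln (INR n).
Proof.
move=> n_gt1; have n_pos : 0 < INR n by apply: INR_pos; lia.
rewrite [INR d * _]Rmult_comm -INR_muln -ln_pow //; apply: ln_le.
  exact/INR_pos/num_po_dim_le_gt0.
by rewrite -INR_expn; apply/INR_leq/num_po_dim_le_upper.
Qed.

(* The lower bound with chains of length [k = n %/ (dq)] and [n - dk >= n (1 - 1/q)]
   free points, using [n <= 2dqk]. *)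
Lemma ln_num_po_lower (q n : nat) : (0 < q)%nat -> (d * q <= n)%nat ->
  INR d * INR n * (1 - / INR q) * (ln (INR n) - ln (INR (2 * d * q)%nat))
  <= ln (INR (num_po_dim_le n d)).
Proof.
move=> q_gt0 dq_le_n; set k := (n %/ (d * q))%nat; set m := (n - d * k)%nat.
have dq_gt0 : (0 < d * q)%nat by rewrite muln_gt0 d_gt0.
have k_gt0 : (0 < k)%nat by rewrite divn_gt0.
have kdq_le_n : (k * (d * q) <= n)%nat := leq_divM n (d * q).
have n_le_2dqk : (n <= 2 * d * q * k)%nat by have := ltn_ceil n dq_gt0; rewrite -/k mulSn; nia.
have dk_le_n : (d * k <= n)%nat by nia.
have m_large : (n * q <= m * q + n)%nat by rewrite mulnBl; nia.
have count : (expn k (m * d) <= num_po_dim_le n d)%nat.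
  by rewrite -(subnK dk_le_n); exact: num_po_dim_le_lower.
have ln_count : INR m * INR d * ln (INR k) <= ln (INR (num_po_dim_le n d)).
  rewrite -INR_muln -ln_pow; last exact: INR_pos.
  by apply: ln_le; [apply/pow_lt/INR_pos | rewrite -INR_expn; apply: INR_leq].
have ln_k : ln (INR n) - ln (INR (2 * d * q)%nat) <= ln (INR k).
  suff : ln (INR n) <= ln (INR (2 * d * q)%nat) + ln (INR k) by lra.
  rewrite -ln_mult -?INR_muln; try by apply: INR_pos; rewrite ?muln_gt0 ?d_gt0.
  by apply: ln_le; [apply: INR_pos; lia | apply: INR_leq].
have {}m_large := INR_leq m_large; rewrite INR_addn !INR_muln in m_large.
have q_ge1 : 1 <= INR q by apply: (INR_leq q_gt0).
have lnk_ge0 := ln_INR_ge0 k_gt0; have d_pos := INR_pos d_gt0.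
have n_pos : 0 <= INR n := pos_INR n.
have inv_q_pos := Rinv_0_lt_compat _ (INR_pos q_gt0).
have inv_q_le1 : / INR q <= 1 by rewrite -Rinv_1; apply: Rinv_le_contravar; lra.
have m_ge : INR n * (1 - / INR q) <= INR m.
  apply: (Rmult_le_reg_r (INR q)); first lra.
  rewrite Rmult_assoc Rmult_minus_distr_r Rinv_l; first lra.
  by apply: not_0_INR; lia.
have coef_ge0 : 0 <= INR d * (INR n * (1 - / INR q)).
  by apply: Rmult_le_pos; [lra | apply: Rmult_le_pos; lra].
apply: Rle_trans ln_count; rewrite (Rmult_assoc (INR d)).
apply: Rle_trans (Rmult_le_compat_l _ _ _ coef_ge0 ln_k) _.
apply: Rmult_le_compat_r lnk_ge0 _; rewrite Rmult_comm.
by apply: Rmult_le_compat_r; lra.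
Qed.

(* The exponent [x] with [N(n) = n^((d + x) n)]; [N(1) = 1] for any exponent. *)
Definition po_exponent (n : nat) : R :=
  if (n <= 1)%nat then 0 else ln (INR (num_po_dim_le n d)) / (INR n * ln (INR n)) - INR d.

Lemma po_exponentP (n : nat) : (1 <= n)%nat ->
  INR (num_po_dim_le n d) = Rpower (INR n) ((INR d + po_exponent n) * INR n).
Proof.
move=> n_ge1; rewrite /po_exponent /Rpower; case: leqP => [n_le1|n_gt1].
  have -> : n = 1%nat by lia.
  by rewrite num_po_dim_le1 //= ln_1 Rmult_0_r exp_0.
have n_pos : 0 < INR n by apply: INR_pos; lia.
have ln_pos := ln_INR_gt0 n_gt1.
rewrite Rplus_minus Rmult_assoc [_ / _ * _]Rmult_comm -Rmult_assoc Rinv_r_simpl_m ?exp_ln //.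
  exact/INR_pos/num_po_dim_le_gt0.
by apply: Rmult_integral_contrapositive; lra.
Qed.

Lemma po_exponent_bounds (q n : nat) : (0 < q)%nat -> (d * q <= n)%nat -> (1 < n)%nat ->
  - (INR d / INR q + INR d * ln (INR (2 * d * q)%nat) / ln (INR n)) <= po_exponent n <= 0.
Proof.
move=> q_gt0 dq_le_n n_gt1; rewrite /po_exponent leqNgt n_gt1 /=.
have n_pos : 0 < INR n by apply: INR_pos; lia.
have q_pos := INR_pos q_gt0; have d_pos := INR_pos d_gt0.
have ln_pos := ln_INR_gt0 n_gt1.
have c_ge0 : 0 <= ln (INR (2 * d * q)%nat) by apply: ln_INR_ge0; rewrite !muln_gt0 d_gt0.
have upper := ln_num_po_upper n_gt1; have lower := ln_num_po_lower q_gt0 dq_le_n.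
set L := ln (INR n) in ln_pos upper lower *; set c := ln (INR _) in c_ge0 lower *.
set lnN := ln (INR _) in upper lower *.
have nL_pos : 0 < INR n * L by apply: Rmult_lt_0_compat.
split; apply: (Rmult_le_reg_r _ _ _ nL_pos).
  have -> : (lnN / (INR n * L) - INR d) * (INR n * L) = lnN - INR d * INR n * L.
    by field; lra.
  have -> : - (INR d / INR q + INR d * c / L) * (INR n * L)
    = - (INR d * INR n * L / INR q + INR d * INR n * c) by field; lra.
  suff : 0 <= INR d * INR n * c / INR q.
    by move: lower; rewrite /Rdiv; lra.
  by apply: Rmult_le_pos; [apply: Rmult_le_pos; [nra | lra] | apply/Rlt_le/Rinv_0_lt_compat].
have -> : (lnN / (INR n * L) - INR d) * (INR n * L) = lnN - INR d * INR n * L by field; lra.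
by rewrite Rmult_0_l; lra.
Qed.

(* Given [eps], choose [q > 2d/eps], then [n] so large that [ln n > 2 d ln (2dq) / eps]. *)
Lemma po_exponent_cv : Un_cv po_exponent 0.
Proof.
move=> eps eps_pos.
have [q lt_q] := INR_unbounded (2 * INR d / eps).
have {}lt_q : 2 * INR d / eps < INR q.+1 by rewrite S_INR; lra.
set c := ln (INR (2 * d * q.+1)%nat).
have [n0 ln_large] := ln_INR_unbounded (2 * (INR d * c) / eps).
exists (maxn 2 (maxn (d * q.+1) n0)) => n /leP; rewrite !geq_max => /and3P [n_gt1 dq_le_n n0_le_n].
have [lower upper] := po_exponent_bounds (ltn0Sn q) dq_le_n n_gt1.
have d_ge0 := pos_INR d.
have c_ge0 : 0 <= c by apply: ln_INR_ge0; rewrite !muln_gt0 d_gt0.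
have small_q := lt_half_of_large_div d_ge0 eps_pos lt_q.
have small_n := lt_half_of_large_div (Rmult_le_pos _ _ d_ge0 c_ge0) eps_pos (ln_large n n0_le_n).
rewrite /Rdist Rminus_0_r Rabs_left1 //.
by move: lower; rewrite -/c; lra.
Qed.
End Asymptotics.

Theorem corollary2p15 (d : nat) (hd : (1 <= d)%N) :
  exists eps : nat -> R, Un_cv eps 0%R /\
    forall n : nat, (1 <= n)%N ->
      INR (num_po_dim_le n d) = Rpower (INR n) ((INR d + eps n) * INR n)%R.
Proof.
exists (po_exponent d); split; first exact: po_exponent_cv.
by move=> n; exact: po_exponentP.
Qed.
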